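(* Let $m,n$ be integers, $w_k=(ab^{-1})^m ab(a^{-1}b)^m$ and $r=w_k^n(ab^{-1})^m$ in the free group $F_{a,b}$. For a word $u\in F_{a,b}$ let $P_u\in\mathbb C[x,y,z]$ be the unique polynomial with $\operatorname{tr}\rho(u)=P_u(\operatorname{tr}\rho(a),\operatorname{tr}\rho(b),\operatorname{tr}\rho(ab^{-1}))$ for all $\rho:F_{a,b}\to\mathrm{SL}_2(\mathbb C)$, and let $\varphi=P_{rab}-P_{\overleftarrow{r}ab}$. Then \[\varphi(x,y,z)=\big(xyz+4-x^2-y^2-z^2\big)\big(S_n(t)S_{m-1}(z)-S_{n-1}(t)S_m(z)\big),\] where $t=\left( xS_m(z)-yS_{m-1}(z) \right)\left( yS_m(z)-xS_{m-1}(z) \right)-z\left(S^2_m(z)+S^2_{m-1}(z)\right)+4S_m(z)S_{m-1}(z)$.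
   Context: $\overleftarrow{u}$ denotes the word $u$ with its letters written in reversed order. The Chebyshev polynomials $S_j(\omega)$ are defined for all integers $j$ by $S_0=1$, $S_1=\omega$, $S_{j+1}=\omega S_j-S_{j-1}$. (The polynomial $\varphi$ cuts out the $\mathrm{SL}_2(\mathbb C)$ character variety of the double twist link $J(2m+1,2n+1)$ in $\mathbb C^3(x,y,z)$.) *)

From HB Require Import structures.
From mathcomp Require Import all_boot all_algebra.
From mathcomp Require Import reals.
From mathcomp.real_closed Require Import complex.
From mathcomp Require Import mpoly.
Set Implicit Arguments. Unset Strict Implicit. Unset Printing Implicit Defensive.
Import GRing.Theory Num.Theory.
Local Open Scope ring_scope.

(* Letters of the free group F_{a,b}: a, a^-1, b, b^-1.  Words are sequences
   of letters (not necessarily reduced; traces do not depend on reduction). *)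
Inductive letter := La | LaI | Lb | LbI.
Definition word := seq letter.

Definition letter_inv (l : letter) : letter :=
  match l with La => LaI | LaI => La | Lb => LbI | LbI => Lb end.

Definition winv (w : word) : word := rev (map letter_inv w).

Definition wpow (w : word) (k : int) : word :=
  match k with
  | Posz n => flatten (nseq n w)
  | Negz n => flatten (nseq n.+1 (winv w))
  end.

Definition wk (m : int) : word :=
  wpow [:: La; LbI] m ++ [:: La; Lb] ++ wpow [:: LaI; Lb] m.

Definition rword (m n : int) : word := wpow (wk m) n ++ wpow [:: La; LbI] m.

Definition wrev (u : word) : word := rev u.

Definition letter_mx (C : fieldType) (A B : 'M[C]_2) (l : letter) : 'M[C]_2 :=
  match l with La => A | LaI => A^-1 | Lb => B | LbI => B^-1 end.

Definition evalw (C : fieldType) (A B : 'M[C]_2) (w : word) : 'M[C]_2 :=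
  foldr (fun l M => letter_mx A B l * M) 1 w.

Definition is_trace_poly (C : fieldType) (P : {mpoly C[3]}) (u : word) : Prop :=
  forall A B : 'M[C]_2, \det A = 1 -> \det B = 1 ->
    \tr (evalw A B u) = P.@[fun i : 'I_3 => tnth [tuple \tr A; \tr B; \tr (A * B^-1)] i].

Fixpoint chebn (R : pzRingType) (w : R) (k : nat) : R :=
  match k with
  | 0 => 1
  | 1 => w
  | (k1.+1 as k2).+1 => w * chebn w k2 - chebn w k1
  end.

Definition cheb (R : pzRingType) (j : int) (w : R) : R :=
  match j with
  | Posz k => chebn w k
  | Negz 0 => 0                 (* S_{-1} = 0 *)
  | Negz k.+1 => - chebn w k    (* S_{-(k+2)} = - S_k *)
  end.

Definition tpar (R : pzRingType) (m : int) (x y z : R) : R :=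
  (x * cheb m z - y * cheb (m - 1) z) * (y * cheb m z - x * cheb (m - 1) z)
  - z * (cheb m z ^+ 2 + cheb (m - 1) z ^+ 2) + 4 * cheb m z * cheb (m - 1) z.

(* The family A = [[x, -1], [1, 0]], B = [[p, -1], [1 - p(y - p), y - p]]
   lies in SL_2 and has (tr A, tr B, tr AB^-1) = (x, y, (x - p)(y - p) + 2), which
   takes every value in C^3; as a polynomial vanishing on C^3 is zero, it suffices
   to check the identity on these matrices.  For M in SL_2, Cayley-Hamilton gives
   M^k = S_(k-1)(tr M) M - S_(k-2)(tr M), hence with W = rho(w_k), V = rho(ab^-1)^m
   and t = tr W,
     tr (W^n V AB) = S_(n-1)(t) tr (W V AB) - S_(n-2)(t) tr (V AB),
   and the same expansion holds for the reversed word after a cyclic rotation.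
   The two resulting trace differences are kappa S_(m-1)(z) and
   kappa (t S_(m-1)(z) - S_m(z)), where kappa = 2 - tr [A, B]. *)

From HB Require Import structures.
From mathcomp Require Import all_boot all_algebra.
From mathcomp Require Import reals.
From mathcomp.real_closed Require Import complex.
From mathcomp Require Import mpoly.
From mathcomp Require Import ring zify.
Import GRing.Theory Num.Theory.
Local Open Scope ring_scope.

Section Chebyshev.
Context {R : comPzRingType}.
Implicit Types (k : int) (w : R).

Lemma chebS k w : cheb (k + 1) w = w * cheb k w - cheb (k - 1) w.
Proof.
case: k => [[|j]|[|j]].
- by rewrite /= mulr1 subr0.
- have -> : Posz j.+1 + 1 = Posz j.+2 by lia.
  by have -> : Posz j.+1 - 1 = Posz j by lia.
- have -> : Negz 0 + 1 = 0 by lia.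
  have -> : Negz 0 - 1 = Negz 1 by lia.
  by rewrite /= mulr0 sub0r opprK.
- have -> : Negz j.+1 + 1 = Negz j by lia.
  have -> : Negz j.+1 - 1 = Negz j.+2 by lia.
  by case: j => [|j] /=; ring.
Qed.

Lemma cheb_sub2 k w : cheb (k - 2) w = w * cheb (k - 1) w - cheb k w.
Proof.
have := chebS (k - 1) w.
have -> : k - 1 + 1 = k by lia.
have -> : k - 1 - 1 = k - 2 by lia.
by move=> ->; ring.
Qed.

Lemma cheb_cassini k w :
  cheb k w ^+ 2 - w * cheb k w * cheb (k - 1) w + cheb (k - 1) w ^+ 2 = 1.
Proof.
pose f k := cheb k w ^+ 2 - w * cheb k w * cheb (k - 1) w + cheb (k - 1) w ^+ 2.
have fS j : f (j + 1) = f j by rewrite /f chebS (_ : j + 1 - 1 = j); [ring | lia].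
rewrite -/(f k); elim/int_rect: k => [|j IH|j IH].
- have -> : f 0 = f (Negz 0 + 1) by congr f; lia.
  by rewrite fS /f /=; ring.
- by rewrite -IH -[in RHS]fS; congr f; lia.
- by rewrite -IH -[in LHS]fS; congr f; lia.
Qed.

Lemma rmorph_cheb (S : comPzRingType) (g : {rmorphism R -> S}) k w :
  g (cheb k w) = cheb k (g w).
Proof.
have gS j : g (chebn w j) = chebn (g w) j /\ g (chebn w j.+1) = chebn (g w) j.+1.
  elim: j => [|j [IH1 IH2]]; first by rewrite /= rmorph1.
  by split=> //=; rewrite rmorphB rmorphM /= IH1 IH2.
case: k => [j|[|j]] /=; first by case: (gS j).
  by rewrite rmorph0.
by rewrite rmorphN; case: (gS j) => ->.
Qed.

Lemma rmorph_tpar (S : comPzRingType) (g : {rmorphism R -> S}) k (a b c : R) :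
  g (tpar k a b c) = tpar k (g a) (g b) (g c).
Proof.
by rewrite /tpar !(rmorphB, rmorphD, rmorphM, rmorphXn, rmorph_cheb) rmorph1.
Qed.

End Chebyshev.

Section Matrix2.
Variable C : comUnitRingType.
Implicit Types (a b c d e f g h k : C) (M N : 'M[C]_2).

Definition mx2 a b c d : 'M[C]_2 :=
  \matrix_(i, j) if i == 0 then (if j == 0 then a else b)
                 else (if j == 0 then c else d).

Lemma mx2P M N : M 0 0 = N 0 0 -> M 0 1 = N 0 1 -> M 1 0 = N 1 0 -> M 1 1 = N 1 1 ->
  M = N.
Proof.
move=> e00 e01 e10 e11; apply/matrixP => i j.
have ord2 (k : 'I_2) : k = 0 \/ k = 1.
  by case: k => [[|[|k]] lt_k2]; [left | right | ]; try apply/val_inj.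
by case: (ord2 i) => ->; case: (ord2 j) => ->.
Qed.

Lemma mx2E M : M = mx2 (M 0 0) (M 0 1) (M 1 0) (M 1 1).
Proof. by apply: mx2P; rewrite !mxE. Qed.

Lemma mx2_mul a b c d e f g h :
  mx2 a b c d * mx2 e f g h = mx2 (a*e+b*g) (a*f+b*h) (c*e+d*g) (c*f+d*h).
Proof.
by apply: mx2P; rewrite !mxE !big_ord_recr big_ord0 /= !mxE add0r.
Qed.

Lemma mx2_add a b c d e f g h :
  mx2 a b c d + mx2 e f g h = mx2 (a+e) (b+f) (c+g) (d+h).
Proof.
by apply: mx2P; rewrite !mxE.
Qed.

Lemma mx2_opp a b c d : - mx2 a b c d = mx2 (-a) (-b) (-c) (-d).
Proof.
by apply: mx2P; rewrite !mxE.
Qed.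

Lemma mx2_scale k a b c d : k *: mx2 a b c d = mx2 (k*a) (k*b) (k*c) (k*d).
Proof.
by apply: mx2P; rewrite !mxE.
Qed.

Lemma mx2_scalar k : k%:M = mx2 k 0 0 k.
Proof.
by apply: mx2P; rewrite !mxE.
Qed.

Lemma mx2_1 : 1 = mx2 1 0 0 1.
Proof. exact: mx2_scalar. Qed.

Lemma mxtrace_mx2 a b c d : \tr (mx2 a b c d) = a + d.
Proof. by rewrite /mxtrace !big_ord_recr big_ord0 /= !mxE add0r. Qed.

Lemma det_mx2 a b c d : \det (mx2 a b c d) = a * d - b * c.
Proof.
rewrite (expand_det_row _ 0) !big_ord_recr big_ord0 /= add0r.
by rewrite /cofactor !det_mx11 !mxE /= addn0 add0n expr0 expr1; ring.
Qed.

Lemma invmx2 a b c d : a * d - b * c = 1 -> (mx2 a b c d)^-1 = mx2 d (-b) (-c) a.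
Proof.
move=> det1; have unit_M : mx2 a b c d \is a GRing.unit.
  by rewrite unitmxE det_mx2 det1 unitr1.
apply: (mulIr unit_M); rewrite mulVr // mx2_mul mx2_1.
by rewrite -det1; congr mx2; ring.
Qed.

Definition mx2_arith :=
  (mx2_mul, mx2_add, mx2_opp, mx2_scale, mx2_scalar, mxtrace_mx2).

Lemma mx2_cayley_hamilton M : M * M = \tr M *: M - (\det M)%:M.
Proof.
by rewrite [M]mx2E det_mx2 !mx2_arith; congr mx2; ring.
Qed.

Lemma sl2_inv M : \det M = 1 -> M^-1 = (\tr M)%:M - M.
Proof.
rewrite [M]mx2E det_mx2 => /invmx2 ->.
by rewrite !mx2_arith; congr mx2; ring.
Qed.

Lemma mxtrace_sl2_inv M : \det M = 1 -> \tr M^-1 = \tr M.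
Proof. by move=> /sl2_inv ->; rewrite [M]mx2E !mx2_arith; ring. Qed.

Lemma sl2_expr M (k : nat) : \det M = 1 ->
  M ^+ k = cheb (k%:Z - 1) (\tr M) *: M - (cheb (k%:Z - 2) (\tr M))%:M.
Proof.
move=> det1; elim: k => [|k IH].
  have -> : 0%:Z - 1 = Negz 0 by lia.
  have -> : 0%:Z - 2 = Negz 1 by lia.
  by rewrite expr0 /= [M]mx2E !mx2_arith mx2_1; congr mx2; ring.
have -> : k.+1%:Z - 1 = k%:Z - 1 + 1 by lia.
have -> : k.+1%:Z - 2 = k%:Z - 1 by lia.
rewrite exprSr IH chebS (_ : k%:Z - 1 - 1 = k%:Z - 2); last by lia.
rewrite mulrBl -scalerAl mx2_cayley_hamilton det1.
move: (cheb (k%:Z - 1) (\tr M)) (cheb (k%:Z - 2) (\tr M)) (\tr M) => c1 c2 t.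
by rewrite [M]mx2E !mx2_arith; congr mx2; ring.
Qed.

End Matrix2.
Arguments mx2 {C}.

Section Words.
Context {C : fieldType} {A B : 'M[C]_2}.
Hypotheses (detA : \det A = 1) (detB : \det B = 1).
Local Notation evalw := (evalw A B).

Lemma evalw_cat u v : evalw (u ++ v) = evalw u * evalw v.
Proof. by elim: u => [|l u IH] /=; rewrite ?mul1r // IH mulrA. Qed.

Lemma det_letter_mx l : \det (letter_mx A B l) = 1.
Proof. by case: l => /=; rewrite ?det_inv ?detA ?detB ?invr1. Qed.

Lemma det_evalw w : \det (evalw w) = 1.
Proof.
elim: w => [|l w IH] /=; first exact: det1.
by rewrite det_mulmx det_letter_mx IH mulr1.
Qed.

Lemma evalw_unit w : evalw w \is a GRing.unit.
Proof. by rewrite unitmxE det_evalw unitr1. Qed.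

Lemma evalw_winv w : evalw (winv w) = (evalw w)^-1.
Proof.
apply: (mulIr (evalw_unit w)); rewrite mulVr ?evalw_unit //.
elim: w => [|l w IH] /=; first by rewrite mulr1.
rewrite /winv /= rev_cons -cats1 evalw_cat /= mulr1 -mulrA.
have unit_l : letter_mx A B l \is a GRing.unit.
  by rewrite unitmxE det_letter_mx unitr1.
have -> : letter_mx A B (letter_inv l) = (letter_mx A B l)^-1.
  by case: l {unit_l} => //=; rewrite invrK.
by rewrite (mulrA _^-1) mulVr // mul1r IH.
Qed.

Lemma evalw_flatten_nseq w k : evalw (flatten (nseq k w)) = evalw w ^+ k.
Proof. by elim: k => [|k IH] //=; rewrite evalw_cat IH exprS. Qed.

Lemma evalw_wpow w k : evalw (wpow w k) =
  cheb (k - 1) (\tr (evalw w)) *: evalw w - (cheb (k - 2) (\tr (evalw w)))%:M.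
Proof.
case: k => k; first by rewrite [wpow _ _]/= evalw_flatten_nseq sl2_expr ?det_evalw.
rewrite -[wpow _ _]/(flatten (nseq k.+1 (winv w))) evalw_flatten_nseq.
rewrite sl2_expr ?det_evalw // evalw_winv.
rewrite mxtrace_sl2_inv ?det_evalw // sl2_inv ?det_evalw //.
have -> : k.+1%:Z - 1 = k by lia.
have -> : k.+1%:Z - 2 = k%:Z - 1 by lia.
have -> : Negz k - 1 = Negz k.+1 by lia.
have -> : Negz k - 2 = Negz k.+2 by lia.
have -> : cheb (Negz k.+2) (\tr (evalw w)) = - cheb (k%:Z + 1) (\tr (evalw w)).
  by rewrite (_ : k%:Z + 1 = k.+1); [|lia].
rewrite chebS /=; move: (evalw w) => M.
move: (cheb (k%:Z - 1) _) (chebn (\tr M) k) => c1 c0.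
by rewrite [M]mx2E !mx2_arith; congr mx2; ring.
Qed.

Lemma mxtrace_evalw_catC u v : \tr (evalw (u ++ v)) = \tr (evalw (v ++ u)).
Proof. by rewrite !evalw_cat -!mulmxE mxtrace_mulC. Qed.

Lemma mxtrace_evalw_wpow_cat w k u :
  \tr (evalw (wpow w k ++ u)) =
    cheb (k - 1) (\tr (evalw w)) * \tr (evalw (w ++ u))
    - cheb (k - 2) (\tr (evalw w)) * \tr (evalw u).
Proof.
rewrite !evalw_cat evalw_wpow mulrBl -scalerAl -mulmxE mul_scalar_mx.
by rewrite raddfB /= !mxtraceZ.
Qed.

End Words.

Lemma rev_wpow w k : rev (wpow w k) = wpow (rev w) k.
Proof.
have revK_winv u : rev (winv u) = winv (rev u) by rewrite /winv revK map_rev revK.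
by case: k => k; rewrite /wpow rev_flatten map_nseq rev_nseq ?revK_winv.
Qed.

Definition wkrev (m : int) : word :=
  wpow [:: Lb; LaI] m ++ [:: Lb; La] ++ wpow [:: LbI; La] m.

Lemma wrev_wk m : wrev (wk m) = wkrev m.
Proof. by rewrite /wrev /wk /wkrev !rev_cat !rev_wpow catA. Qed.

Lemma wrev_rword m n :
  wrev (rword m n) = wpow [:: LbI; La] m ++ wpow (wkrev m) n.
Proof. by rewrite /wrev /rword rev_cat !rev_wpow -/(wrev (wk m)) wrev_wk. Qed.

(* 2 - tr [A, B] in the trace coordinates (x, y, z) of (A, B) *)
Definition kappa (R : pzRingType) (x y z : R) :=
  x * y * z + 4 - x ^+ 2 - y ^+ 2 - z ^+ 2.
Arguments kappa {R}.

Section TraceCoordinates.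
Context {C : fieldType} (x y p : C) (m : int).

Definition mxA := mx2 x (-1) 1 0.
Definition mxB := mx2 p (-1) (1 - p * (y - p)) (y - p).
Definition zpar := (x - p) * (y - p) + 2.

Lemma det_mxA : \det mxA = 1. Proof. by rewrite det_mx2; ring. Qed.
Lemma det_mxB : \det mxB = 1. Proof. by rewrite det_mx2; ring. Qed.

Lemma invmxA : mxA^-1 = mx2 0 1 (-1) x.
Proof. by rewrite invmx2; [congr mx2; ring | ring]. Qed.
Lemma invmxB : mxB^-1 = mx2 (y - p) 1 (p * (y - p) - 1) p.
Proof. by rewrite invmx2; [congr mx2; ring | ring]. Qed.

Local Notation evalw := (evalw mxA mxB).

Ltac expand_mx2 :=
  rewrite /= ?mulr1 ?invmxA ?invmxB /mxA /mxB ?mx2_arith /zpar.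

Lemma mxtrace_aVb : \tr (evalw [:: La; LbI]) = zpar.
Proof. by expand_mx2; ring. Qed.
Lemma mxtrace_Vab : \tr (evalw [:: LaI; Lb]) = zpar.
Proof. by expand_mx2; ring. Qed.
Lemma mxtrace_Vba : \tr (evalw [:: LbI; La]) = zpar.
Proof. by expand_mx2; ring. Qed.
Lemma mxtrace_bVa : \tr (evalw [:: Lb; LaI]) = zpar.
Proof. by expand_mx2; ring. Qed.

Ltac expand_words :=
  rewrite !evalw_cat !(evalw_wpow det_mxA det_mxB)
    ?mxtrace_aVb ?mxtrace_Vab ?mxtrace_Vba ?mxtrace_bVa cheb_sub2.

Lemma mxtrace_wk : \tr (evalw (wk m)) = tpar m x y zpar.
Proof.
rewrite /wk /tpar; expand_words.
move: (cheb m zpar) (cheb (m - 1) zpar) => u v.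
by expand_mx2; ring.
Qed.

Lemma mxtrace_wkrev : \tr (evalw (wkrev m)) = tpar m x y zpar.
Proof.
rewrite /wkrev /tpar; expand_words.
move: (cheb m zpar) (cheb (m - 1) zpar) => u v.
by expand_mx2; ring.
Qed.

Lemma mxtrace_sub_pow :
  \tr (evalw (wpow [:: La; LbI] m ++ [:: La; Lb]))
  - \tr (evalw ([:: La; Lb] ++ wpow [:: LbI; La] m))
  = kappa x y zpar * cheb (m - 1) zpar.
Proof.
expand_words; move: (cheb m zpar) (cheb (m - 1) zpar) => u v.
by rewrite /kappa; expand_mx2; ring.
Qed.

Lemma mxtrace_sub_wk_pow :
  \tr (evalw (wk m ++ wpow [:: La; LbI] m ++ [:: La; Lb]))
  - \tr (evalw (wkrev m ++ [:: La; Lb] ++ wpow [:: LbI; La] m))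
  = kappa x y zpar * (tpar m x y zpar * cheb (m - 1) zpar - cheb m zpar).
Proof.
rewrite /wk /wkrev /tpar; expand_words.
have := cheb_cassini m zpar.
move: (cheb m zpar) (cheb (m - 1) zpar) => u v cassini.
(* Multiplying u by the Cassini form makes both sides homogeneous cubics in (u, v). *)
transitivity (kappa x y zpar *
  (((x * u - y * v) * (y * u - x * v) - zpar * (u ^+ 2 + v ^+ 2) + 4 * u * v) * v
   - u * (u ^+ 2 - zpar * u * v + v ^+ 2))).
  by rewrite /kappa; expand_mx2; ring.
by rewrite cassini mulr1.
Qed.

Lemma mxtrace_rab_sub n :
  \tr (evalw (rword m n ++ [:: La; Lb]))
  - \tr (evalw (wrev (rword m n) ++ [:: La; Lb]))
  = kappa x y zpar * (cheb n (tpar m x y zpar) * cheb (m - 1) zpar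
                      - cheb (n - 1) (tpar m x y zpar) * cheb m zpar).
Proof.
have rab : \tr (evalw (rword m n ++ [:: La; Lb])) =
    cheb (n - 1) (tpar m x y zpar)
      * \tr (evalw (wk m ++ wpow [:: La; LbI] m ++ [:: La; Lb]))
    - cheb (n - 2) (tpar m x y zpar)
      * \tr (evalw (wpow [:: La; LbI] m ++ [:: La; Lb])).
  by rewrite /rword -catA (mxtrace_evalw_wpow_cat det_mxA det_mxB) mxtrace_wk.
have rrab : \tr (evalw (wrev (rword m n) ++ [:: La; Lb])) =
    cheb (n - 1) (tpar m x y zpar)
      * \tr (evalw (wkrev m ++ [:: La; Lb] ++ wpow [:: LbI; La] m))
    - cheb (n - 2) (tpar m x y zpar)
      * \tr (evalw ([:: La; Lb] ++ wpow [:: LbI; La] m)).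
  rewrite wrev_rword -catA mxtrace_evalw_catC -catA.
  by rewrite (mxtrace_evalw_wpow_cat det_mxA det_mxB) mxtrace_wkrev.
rewrite rab rrab (cheb_sub2 n).
move: mxtrace_sub_wk_pow mxtrace_sub_pow.
set X1 := \tr (evalw (wk m ++ _)); set Y1 := \tr (evalw (wkrev m ++ _)).
set X0 := \tr (evalw (wpow _ m ++ _)); set Y0 := \tr (evalw ([:: La; Lb] ++ _)).
move=> /(canRL (subrK Y1)) -> /(canRL (subrK Y0)) ->.
by rewrite /kappa; ring.
Qed.

End TraceCoordinates.

Lemma digits_inj {n D : nat} {f g : 'I_n -> nat} :
  (forall i, f i < D)%N -> (forall i, g i < D)%N ->
  (\sum_i f i * D ^ i = \sum_i g i * D ^ i)%N -> f =1 g.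
Proof.
elim: n f g => [|n IH] f g ltfD ltgD; first by move=> _ [].
have D_gt0 : (0 < D)%N by apply: leq_ltn_trans (ltfD ord0).
have split_sum u : (\sum_(i < n.+1) u i * D ^ i =
    u ord0 + D * \sum_(i < n) u (lift ord0 i) * D ^ i)%N.
  rewrite big_ord_recl expn0 muln1 big_distrr; congr (_ + _).
  by apply: eq_bigr => i _; rewrite /= expnS mulnCA.
rewrite !split_sum => e.
have e0 : f ord0 = g ord0.
  have := congr1 (modn^~ D) e; rewrite /= ![(_ + D * _)%N]addnC ![(D * _)%N]mulnC.
  by rewrite !modnMDl !modn_small.
have e' : (\sum_(i < n) f (lift ord0 i) * D ^ i = \sum_(i < n) g (lift ord0 i) * D ^ i)%N.
  by move: e; rewrite e0 => /addnI /eqP; rewrite eqn_mul2l gtn_eqF // => /eqP.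
move=> i; have [j ->|->] := unliftP ord0 i; last exact: e0.
by apply: (IH (f \o lift ord0) (g \o lift ord0)) => // k /=.
Qed.

Lemma poly_exists_nonroot {C : numDomainType} {q : {poly C}} :
  q != 0 -> exists x, ~~ root q x.
Proof.
move=> q_neq0; pose s := [seq k%:R : C | k <- iota 0 (size q)].
have uniq_s : uniq s.
  by rewrite map_inj_uniq ?iota_uniq // => i j /eqP; rewrite eqr_nat => /eqP.
have : ~~ all (root q) s.
  apply/negP => roots_s; have := max_poly_roots q_neq0 roots_s uniq_s.
  by rewrite size_map size_iota ltnn.
by case/allPn => x _; exists x.
Qed.

Lemma mpoly_eval_eq0 (n : nat) (C : numDomainType) (p : {mpoly C[n]}) :
  (forall v, p.@[v] = 0) -> p = 0.
Proof.
move=> p_eval0; pose D := msize p.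
(* Kronecker substitution x_i := x ^+ D^i, injective on monomials with exponents < D. *)
pose kron (m : 'X_{1..n}) := (\sum_i m i * D ^ i)%N.
have lt_mD m (i : 'I_n) : m \in msupp p -> (m i < D)%N.
  move=> /msize_mdeg_lt; apply: leq_ltn_trans.
  by rewrite mdegE (bigD1 i) //= leq_addr.
have kron_inj : {in msupp p &, injective kron}.
  move=> m1 m2 m1p m2p e; apply/mnmP.
  exact: (digits_inj (fun j => lt_mD m1 j m1p) (fun j => lt_mD m2 j m2p) e).
pose q : {poly C} := \sum_(m <- msupp p) p@_m *: 'X^(kron m).
have qE x : q.[x] = p.@[fun i => x ^+ (D ^ i)].
  rewrite mevalE horner_sum; apply: eq_bigr => m _.
  rewrite hornerZ hornerXn /kron -prodrXr; congr (_ * _).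
  by apply: eq_bigr => i _; rewrite -exprM mulnC.
have q_coef m : m \in msupp p -> q`_(kron m) = p@_m.
  move=> mp; rewrite coef_sum (bigD1_seq m) ?msupp_uniq //=.
  rewrite coefZ coefXn eqxx mulr1 big1 ?addr0 // => m' m'_neq_m.
  rewrite coefZ coefXn; case: eqP => [e|]; last by rewrite mulr0.
  have [m'p|m'Np] := boolP (m' \in msupp p); last by rewrite memN_msupp_eq0 ?mul0r.
  by rewrite (kron_inj _ _ mp m'p e) eqxx in m'_neq_m.
apply/mpolyP => m; rewrite mcoeff0.
have [mp|mNp] := boolP (m \in msupp p); last exact: memN_msupp_eq0.
have q_neq0 : q != 0.
  apply/eqP => q0; have := q_coef _ mp.
  by rewrite q0 coef0 => /esym/eqP; rewrite mcoeff_eq0 mp.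
have [x] := poly_exists_nonroot q_neq0.
by rewrite /root qE p_eval0 eqxx.
Qed.

Lemma zpar_surj {C : numClosedFieldType} (x y z : C) : exists p, zpar x y p = z.
Proof.
pose s := sqrtC ((x - y) ^+ 2 + 4 * (z - 2)).
have s2 : s ^+ 2 = (x - y) ^+ 2 + 4 * (z - 2) by rewrite sqrtCK.
exists ((x + y + s) / 2); rewrite /zpar.
have two_neq0 : (2 : C) != 0 by rewrite pnatr_eq0.
transitivity ((s ^+ 2 - (x - y) ^+ 2) / 4 + 2); first by field.
by rewrite s2; field.
Qed.

Lemma trace_poly_eval {C : fieldType} {P : {mpoly C[3]}} {u : word}
    {v : 'I_3 -> C} {p : C} :
  is_trace_poly P u -> zpar (v 0) (v 1) p = v 2 ->
  P.@[v] = \tr (evalw (mxA (v 0)) (mxB (v 1) p) u).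
Proof.
move=> /(_ _ _ (det_mxA _) (det_mxB _ _)) -> zp; apply: meval_eq => i.
have -> : mxA (v 0) * (mxB (v 1) p)^-1 = evalw (mxA (v 0)) (mxB (v 1) p) [:: La; LbI].
  by rewrite /= mulr1.
rewrite mxtrace_aVb zp /mxA /mxB !mxtrace_mx2 addr0 addrC subrK.
by rewrite (tnth_nth 0); case: i => [[|[|[|i]]] Hi] //=; congr v; apply/val_inj.
Qed.

Lemma meval_cheb (C : comNzRingType) (n : nat) (v : 'I_n -> C) (w : {mpoly C[n]}) k :
  (cheb k w).@[v] = cheb k w.@[v].
Proof. exact: (rmorph_cheb _ (meval v)). Qed.

Lemma meval_tpar (C : comNzRingType) (n : nat) (v : 'I_n -> C) (a b c : {mpoly C[n]}) k :
  (tpar k a b c).@[v] = tpar k a.@[v] b.@[v] c.@[v].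
Proof. exact: (rmorph_tpar _ (meval v)). Qed.

Theorem proposition3p10 (R : realType) (m n : int)
    (Prab Prevab : {mpoly R[i][3]}) :
  is_trace_poly Prab (rword m n ++ [:: La; Lb]) ->
  is_trace_poly Prevab (wrev (rword m n) ++ [:: La; Lb]) ->
  let x : {mpoly R[i][3]} := 'X_0 in
  let y : {mpoly R[i][3]} := 'X_1 in
  let z : {mpoly R[i][3]} := 'X_2 in
  let t := tpar m x y z in
  Prab - Prevab =
    (x * y * z + 4 - x ^+ 2 - y ^+ 2 - z ^+ 2)
    * (cheb n t * cheb (m - 1) z - cheb (n - 1) t * cheb m z).
Proof.
move=> tr_rab tr_rrab x y z t.
apply/eqP; rewrite -subr_eq0; apply/eqP; apply: mpoly_eval_eq0 => v.
have [p zp] := zpar_surj (v 0) (v 1) (v 2).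
rewrite mevalB (mevalB v Prab) (trace_poly_eval tr_rab zp) (trace_poly_eval tr_rrab zp).
rewrite mxtrace_rab_sub zp /kappa /t.
rewrite !(mevalB, mevalD, mevalM, mevalMn, meval1, meval_cheb, meval_tpar, rmorphXn).
by rewrite !mevalXU subrr.
Qed.
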